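(* Let $\rho:\mathcal{M}_2\to \mathrm{GL}(5,\mathbb{Z}[t,t^{-1}])$ be the Jones representation of the mapping class group $\mathcal{M}_2$ of a closed oriented surface of genus $2$, fix $\varepsilon\in\{1,-1\}$, and let $\varphi:\mathcal{M}_2\to\mathrm{GL}(5,\mathbb{Q}[[h]])$ be obtained from $\rho$ by the substitution $t=\varepsilon e^{h}$. For $k\ge1$ let $\mathcal{F}_k=\{x\in\mathcal{I}_2:\ \varphi(x)\equiv I\pmod{h^k}\}$, where $\mathcal{I}_2$ is the Torelli subgroup, and let $\mathcal{G}_k^{\mathbb{Q}}\mathcal{F}=(\mathcal{F}_k/\mathcal{F}_{k+1})\otimes\mathbb{Q}$, with the module structure induced by conjugation by $\mathcal{M}_2$: a module over $\mathrm{Sp}(4,\mathbb{Q})$ when $\varepsilon=-1$ and over the symmetric group $\mathfrak{S}_6$ when $\varepsilon=1$. Then for every $k\ge1$, $\mathcal{G}_k^{\mathbb{Q}}\mathcal{F}$ does not contain the trivial $1$-dimensional representation as a summand (i.e. $\Gamma_{0,0}$ in the case $\varepsilon=-1$, resp. $[6]$ in the case $\varepsilon=1$, does not occur).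
   Context: The Jones representation $\rho$ is the $5$-dimensional representation of $\mathcal{M}_2$ constructed by V. F. R. Jones (via the hyperelliptic description of $\mathcal{M}_2$ and the Iwahori–Hecke algebra representation of the braid group $B_6$ attached to the rectangular Young diagram $(3,3)$). $I$ is the $5\times5$ identity matrix and $\mathcal{I}_2$ the Torelli subgroup of $\mathcal{M}_2$. The groups $\mathcal{F}_k/\mathcal{F}_{k+1}$ are free abelian of finite rank; they embed $\mathcal{M}_2$-equivariantly into $M(5,\mathbb{Q})$ (with $\mathcal{M}_2$ acting by conjugation via $\varphi$ mod $h$) through the map $x\mapsto\Delta_k(x)$ defined by $\varphi(x)\equiv I+h^k\Delta_k(x)\pmod{h^{k+1}}$. As a module, $M(5,\mathbb{Q})$ decomposes as $\Gamma_{0,2}\oplus\Gamma_{2,0}\oplus\Gamma_{0,0}$ over $\mathrm{Sp}(4,\mathbb{Q})$ (case $\varepsilon=-1$) and as $[6]\oplus[4,2]\oplus[2^3]\oplus[3,1^3]$ over $\mathfrak{S}_6$ (case $\varepsilon=1$), the trivial summand being the scalar matrices. *)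

From HB Require Import structures.
From mathcomp Require Import all_boot all_order all_algebra.
Set Implicit Arguments. Unset Strict Implicit. Unset Printing Implicit Defensive.
Import Order.TTheory GRing.Theory Num.Theory.
Local Open Scope ring_scope.

(* Elements of the genus-2 mapping class group M_2, via the hyperelliptic     *)
(* (Birman-Hilden) description: M_2 is generated by sigma_1..sigma_5 (the     *)
(* Dehn twists about a chain c_1..c_5).  An element is represented by a word  *)
(* in the letters sigma_i^{+1} (true) and sigma_i^{-1} (false).  All the      *)
(* objects below (rho, phi, the symplectic action) are homomorphisms from the *)
(* free group that kill the defining relations of M_2, so they are well       *)
(* defined on M_2; working with words is therefore harmless.                  *)
Definition letter := ('I_5 * bool)%type.
Definition word := seq letter.

Definition winv (w : word) : word := rev (map (fun l : letter => (l.1, ~~ l.2)) w).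

(* The Jones representation rho (Young diagram (3,3)).                        *)
(* Iwahori-Hecke generator g_i with (g_i - q)(g_i + 1) = 0 acts on the        *)
(* 5-dimensional (3,3)-module as  g_i = q + U_i, where U_i is the             *)
(* Temperley-Lieb generator in the (rescaled) cup-diagram basis below.        *)
(* Jones' normalisation: q = t^5 and rho(sigma_i) = t^{-3} g_i, so that the   *)
(* relations (s1..s5)^6 = 1, iota^2 = 1, [iota, s1] = 1 of M_2 hold and       *)
(* det rho(sigma_i) = 1; then rho(sigma_i)^{-1} = t^{-2} (1 + U_i).           *)
Section Jones.
Variable R : comNzRingType.

Definition jU_entry (q : R) (i a b : nat) : R :=
  match i, a, b with
  | 0,0,0 | 0,1,1 | 1,2,2 | 1,3,3 | 2,0,0 | 2,4,4
  | 3,1,1 | 3,3,3 | 4,0,0 | 4,2,2 => - (1 + q)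
  | 0,0,2 | 0,0,4 | 1,3,1 | 1,3,4 | 2,0,1 | 2,0,2
  | 3,3,2 | 3,3,4 | 4,0,1 | 4,0,4 => q
  | 0,1,3 | 1,2,0 | 2,4,3 | 3,1,0 | 4,2,3 => 1
  | _,_,_ => 0
  end.

Definition jU (q : R) (i : 'I_5) : 'M[R]_5 :=
  \matrix_(a < 5, b < 5) jU_entry q i a b.

(* image of the letter sigma_i^{+-1}, given t and its inverse ti *)
Definition jones_gen (t ti : R) (l : letter) : 'M[R]_5 :=
  if l.2 then ti ^+ 3 *: ((t ^+ 5)%:M + jU (t ^+ 5) l.1)
  else ti ^+ 2 *: (1%:M + jU (t ^+ 5) l.1).

Definition jones_word (t ti : R) (w : word) : 'M[R]_5 :=
  foldr (fun l A => jones_gen t ti l *m A) 1%:M w.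
End Jones.

(* phi = rho with t = eps * e^h, in Q[[h]].  We compute modulo h^N: the       *)
(* series e^{h}, e^{-h} are truncated to degree < N (truncation mod h^N is a  *)
(* ring morphism), and only coefficients of degree < N of the resulting       *)
(* polynomial matrix are ever used.                                           *)
Definition expS (N : nat) (c : rat) : {poly rat} :=
  \poly_(j < N) (c ^+ j / (j`!)%:R).

(* phiN eps N w : a polynomial matrix whose coefficients of degree < N are    *)
(* those of phi(w) in Q[[h]]  (note eps^{-1} = eps).                          *)
Definition phiN (eps : rat) (N : nat) (w : word) : 'M[{poly rat}]_5 :=
  jones_word (eps%:P * expS N 1) (eps%:P * expS N (-1)) w.

(* phi mod h, i.e. rho at t = eps *)
Definition rho_eps (eps : rat) (w : word) : 'M[rat]_5 := jones_word eps eps w.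

(* Symplectic basis a1,b1,a2,b2 with omega(a_i,b_i) = 1; the chain curves     *)
(* have classes c1 = a1, c2 = b1, c3 = a2 - a1, c4 = b2, c5 = a2, and the     *)
(* Dehn twist about c acts by x |-> x + omega(x,c) c.                         *)
Definition omegaJ : 'M[int]_4 :=
  \matrix_(a < 4, b < 4)
    (if (a == 0 :> nat) && (b == 1 :> nat) then 1
     else if (a == 1 :> nat) && (b == 0 :> nat) then -1
     else if (a == 2 :> nat) && (b == 3 :> nat) then 1
     else if (a == 3 :> nat) && (b == 2 :> nat) then -1 else 0).

Definition chain_entry (i a : nat) : int :=
  match i, a with
  | 0,0 => 1
  | 1,1 => 1
  | 2,0 => -1
  | 2,2 => 1
  | 3,3 => 1
  | 4,2 => 1
  | _,_ => 0
  end.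

Definition chain_class (i : 'I_5) : 'cV[int]_4 := \col_(a < 4) chain_entry i a.

Definition symp_gen (l : letter) : 'M[int]_4 :=
  1%:M + (if l.2 then 1 else -1) *:
           (chain_class l.1 *m (chain_class l.1)^T *m omegaJ^T).

Definition symp_word (w : word) : 'M[int]_4 :=
  foldr (fun l A => symp_gen l *m A) 1%:M w.

Definition torelli (w : word) : Prop := symp_word w = 1%:M.

Definition inF (eps : rat) (k : nat) (w : word) : Prop :=
  torelli w /\
  forall (a b : 'I_5) (j : nat), (j < k)%N ->
    (phiN eps k w a b)`_j = ((1%:M : 'M[{poly rat}]_5) a b)`_j.

(* Delta_k(x): phi(x) = I + h^k Delta_k(x) mod h^(k+1)  (k >= 1) *)
Definition Delta (eps : rat) (k : nat) (w : word) : 'M[rat]_5 :=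
  \matrix_(a < 5, b < 5) (phiN eps k.+1 w a b)`_k.

(* G_k^Q F = (F_k/F_{k+1}) (x) Q, realised (via the embedding Delta_k) as the *)
(* Q-span of Delta_k(F_k) inside M(5,Q).                                      *)
Definition GkF (eps : rat) (k : nat) (A : 'M[rat]_5) : Prop :=
  exists (n : nat) (c : 'I_n -> rat) (x : 'I_n -> word),
    (forall i, inF eps k (x i)) /\ A = \sum_(i < n) c i *: Delta eps k (x i).

(* action of g in M_2 (induced by conjugation x |-> g x g^{-1}) *)
Definition act (eps : rat) (g : word) (A : 'M[rat]_5) : 'M[rat]_5 :=
  rho_eps eps g *m A *m rho_eps eps (winv g).

Definition is_subspace (W : 'M[rat]_5 -> Prop) : Prop :=
  W 0 /\ (forall X Y, W X -> W Y -> W (X + Y)) /\ (forall (c : rat) X, W X -> W (c *: X)).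

Definition has_trivial_summand (eps : rat) (V : 'M[rat]_5 -> Prop) : Prop :=
  exists A : 'M[rat]_5,
    [/\ A != 0, V A, (forall g, act eps g A = A) &
     exists W : 'M[rat]_5 -> Prop,
       [/\ is_subspace W, (forall X, W X -> V X),
           (forall g X, W X -> W (act eps g X)), ~ W A &
           (forall X, V X -> exists c : rat, W (X - c *: A))]].

From HB Require Import structures.
From mathcomp Require Import all_boot all_order all_algebra.
From mathcomp Require Import fingroup perm ring lra zify.
Set Implicit Arguments. Unset Strict Implicit. Unset Printing Implicit Defensive.
Import Order.TTheory GRing.Theory Num.Theory.
Local Open Scope ring_scope.

(* Every Delta_k(x) with x in F_k is traceless: det phi(x) = 1 since each
   rho(sigma_i) has determinant 1, whereas modulo h^(k+1) the determinant of
   phi(x) = I + h^k Delta_k(x) is 1 + h^k tr Delta_k(x).  On the other hand a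
   matrix fixed by the conjugation action of M_2 commutes with every rho(sigma_i)
   at t = eps, hence with all Temperley-Lieb generators U_i at q = eps = +-1,
   and the (3,3)-module being irreducible there, it is scalar.  A traceless
   scalar matrix is zero, so G_k F has no nonzero invariant vector at all. *)

Definition o0 : 'I_5 := @Ordinal 5 0 isT.
Definition o1 : 'I_5 := @Ordinal 5 1 isT.
Definition o2 : 'I_5 := @Ordinal 5 2 isT.
Definition o3 : 'I_5 := @Ordinal 5 3 isT.
Definition o4 : 'I_5 := @Ordinal 5 4 isT.

Lemma ord5P (a : 'I_5) : a = o0 \/ a = o1 \/ a = o2 \/ a = o3 \/ a = o4.
Proof.
by case: a => [[|[|[|[|[|//]]]]] ?];
  [left | right; left | do 2 right; left | do 3 right; left | do 4 right]; apply: val_inj.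
Qed.

Lemma big_ord5 (R : nmodType) (F : 'I_5 -> R) :
  \sum_(c < 5) F c = F o0 + F o1 + F o2 + F o3 + F o4.
Proof.
by rewrite !big_ord_recr big_ord0 /= add0r; do !congr (_ + _); congr F; apply: val_inj.
Qed.

Lemma expand_det_diag_row (R : comNzRingType) n (A : 'M[R]_n.+1) i :
  (forall j, j != i -> A i j = 0) -> \det A = A i i * \det (row' i (col' i A)).
Proof.
move=> A_i; rewrite (expand_det_row _ i) (bigD1 i) //= big1 ?addr0.
  by rewrite /cofactor addnn -mul2n exprM sqrrN !expr1n mul1r.
by move=> j /A_i ->; rewrite mul0r.
Qed.

Section TemperleyLieb.
Variable R : comNzRingType.

Lemma map_jU (S : comNzRingType) (f : {rmorphism R -> S}) (q : R) i :
  map_mx f (jU q i) = jU (f q) i.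
Proof.
apply/matrixP => a b; rewrite !mxE.
case: i => [[|[|[|[|[|//]]]]] ?]; case: a => [[|[|[|[|[|//]]]]] ?];
  case: b => [[|[|[|[|[|//]]]]] ?]; by rewrite /= ?rmorph0 ?rmorphN ?rmorphD ?rmorph1.
Qed.

Lemma jU_sqr (q : R) i : jU q i *m jU q i = - (1 + q) *: jU q i.
Proof.
apply/matrixP => a b; rewrite !mxE big_ord5 !mxE.
case: (ord5P i) => [->|[->|[->|[->|->]]]]; case: (ord5P a) => [->|[->|[->|[->|->]]]];
  case: (ord5P b) => [->|[->|[->|[->|->]]]] /=; ring.
Qed.

Local Ltac expand_diag_row n i :=
  rewrite (@expand_det_diag_row _ _ _ (@Ordinal n i isT));
  last by case=> [[|[|[|[|[|//]]]]] ?] //= _; rewrite !mxE /= ?mxE /=; ring.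

Local Ltac expand_last_rows :=
  expand_diag_row 2%N 1%N; expand_diag_row 1%N 0%N; rewrite det_mx00 !mxE /= ?mxE /=; ring.

(* In each case three rows of x + U_i carry only their diagonal entry x. *)
Lemma det_scalar_add_jU (x q : R) i : \det (x%:M + jU q i) = x ^+ 3 * (x - 1 - q) ^+ 2.
Proof.
case: i => [[|[|[|[|[|//]]]]] ?].
- expand_diag_row 5%N 4%N; expand_diag_row 4%N 3%N; expand_diag_row 3%N 2%N; expand_last_rows.
- expand_diag_row 5%N 4%N; expand_diag_row 4%N 1%N; expand_diag_row 3%N 0%N; expand_last_rows.
- expand_diag_row 5%N 3%N; expand_diag_row 4%N 2%N; expand_diag_row 3%N 1%N; expand_last_rows.
- expand_diag_row 5%N 4%N; expand_diag_row 4%N 2%N; expand_diag_row 3%N 0%N; expand_last_rows.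
- expand_diag_row 5%N 4%N; expand_diag_row 4%N 3%N; expand_diag_row 3%N 1%N; expand_last_rows.
Qed.

End TemperleyLieb.

Section JonesWord.
Variable R : comNzRingType.

Lemma map_jones_word (S : comNzRingType) (f : {rmorphism R -> S}) (t ti : R) w :
  map_mx f (jones_word t ti w) = jones_word (f t) (f ti) w.
Proof.
elim: w => [|l w IHw] /=; first exact: map_mx1.
rewrite map_mxM IHw /jones_gen; case: l.2;
  by rewrite map_mxZ map_mxD map_scalar_mx map_jU !rmorphXn ?rmorph1.
Qed.

Lemma map_jones_word_eq (S : comNzRingType) (f : {rmorphism R -> S}) (t ti t' ti' : R) w :
  f t = f t' -> f ti = f ti' -> map_mx f (jones_word t ti w) = map_mx f (jones_word t' ti' w).
Proof. by move=> ft fti; rewrite !map_jones_word ft fti. Qed.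

Variables (t ti : R).
Hypothesis t_ti : t * ti = 1.

Lemma jones_gen_inv i : jones_gen t ti (i, false) *m jones_gen t ti (i, true) = 1%:M.
Proof.
set q := t ^+ 5; set U := jU q i.
have hecke_rel : (1%:M + U) *m (q%:M + U) = q%:M.
  rewrite mulmxDl mul1mx mulmxDr mul_mx_scalar jU_sqr.
  by apply/matrixP => a b; rewrite !mxE; ring.
rewrite /jones_gen /= -scalemxAl -scalemxAr hecke_rel scalerA scale_scalar_mx.
by rewrite -exprD -[q]/(t ^+ 5) -exprMn mulrC t_ti expr1n.
Qed.

Lemma det_jones_word w : \det (jones_word t ti w) = 1.
Proof.
elim: w => [|[i b] w IHw] /=; first exact: det1.
rewrite det_mulmx IHw mulr1 /jones_gen; case: b; rewrite /= detZ det_scalar_add_jU.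
  by transitivity ((t * ti) ^+ 15); [ring | rewrite t_ti expr1n].
by transitivity ((t * ti) ^+ 10); [ring | rewrite t_ti expr1n].
Qed.
End JonesWord.

Lemma prod_add1_sqr0 (R : comRingType) I (r : seq I) (c : R) (F : I -> R) : c * c = 0 ->
  \prod_(i <- r) (1 + c * F i) = 1 + c * \sum_(i <- r) F i.
Proof.
move=> c2; elim: r => [|a r IHr]; first by rewrite !big_nil mulr0 addr0.
rewrite !big_cons IHr.
transitivity (1 + c * (F a + \sum_(i <- r) F i) + c * c * (F a * \sum_(i <- r) F i)); first by ring.
by rewrite c2 mul0r addr0.
Qed.

Lemma det1_addZ_sqr0 (R : comNzRingType) n (c : R) (A : 'M[R]_n) : c * c = 0 ->
  \det (1%:M + c *: A) = 1 + c * \tr A.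
Proof.
move=> c2; have offdiag i j : i != j -> (1%:M + c *: A) i j = c * A i j.
  by move=> ij; rewrite !mxE (negbTE ij) add0r.
rewrite /determinant (bigD1 (1%g : 'S_n)) //= odd_perm1 expr0 mul1r.
rewrite [X in _ + X]big1 ?addr0 => [|s s_ne1].
  under eq_bigr do rewrite perm1 !mxE eqxx.
  by rewrite prod_add1_sqr0.
have [i si] : exists i, s i != i.
  apply/existsP; apply: contraR s_ne1 => /existsPn fix_s; apply/eqP/permP => i.
  by rewrite perm1; apply/eqP; rewrite -[_ == _]negbK fix_s.
have ssi : s (s i) != s i by apply: contra si => /eqP /perm_inj ->.
rewrite (bigD1 i) //= (bigD1 (s i)) //= !offdiag 1?eq_sym // mulrA mulrACA c2.
by rewrite !mul0r mulr0.
Qed.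

(* [in_qpoly 'X^n] is reduction modulo h^n, a ring morphism onto Q[h]/(h^n). *)
Lemma in_qpolyXnE (R : comNzRingType) n (p : {poly R}) : (0 < n)%N ->
  val (in_qpoly 'X^n p) = take_poly n p.
Proof. by move=> n_gt0; rewrite /= mk_monic_Xn prednK // Pdiv.RingMonic.take_poly_rmodp. Qed.

Lemma in_qpolyXn_eq (R : comNzRingType) n (p q : {poly R}) : (0 < n)%N ->
  in_qpoly 'X^n p = in_qpoly 'X^n q <-> forall j, (j < n)%N -> p`_j = q`_j.
Proof.
move=> n_gt0; split => [pq j jn | pq].
  move: (congr1 val pq); rewrite !in_qpolyXnE // => /polyP/(_ j).
  by rewrite !coef_take_poly jn.
apply: val_inj; rewrite !in_qpolyXnE //; apply/polyP => j.
by rewrite !coef_take_poly; case: ifP => // /pq.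
Qed.

Lemma coef_expS N c j : (j < N)%N -> (expS N c)`_j = c ^+ j / (j`!)%:R.
Proof. by move=> jN; rewrite coef_poly jN. Qed.

(* The coefficients of [e^h e^(-h)] are the binomial expansions of [(1 - 1)^j / j!]. *)
Lemma coef_expS_mul N j : (j < N)%N -> (expS N 1 * expS N (-1))`_j = (j == 0%N)%:R.
Proof.
move=> jN; rewrite coefM.
under eq_bigr => i _ do rewrite !coef_expS ?(leq_ltn_trans (leq_ord i) jN)
  ?(leq_ltn_trans (leq_subr i j) jN) // expr1n.
case: j jN => [|j] jN; first by rewrite big_ord1 subnn expr0 fact0 divr1 mulr1.
have fact_neq0 m : (m`!)%:R != 0 :> rat by rewrite pnatr_eq0 -lt0n fact_gt0.
transitivity (((j.+1)`!%:R : rat)^-1 *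
              \sum_(i < j.+2) (-1) ^+ (j.+1 - i) * 1 ^+ i *+ 'C(j.+1, i)).
  rewrite mulr_sumr; apply: eq_bigr => i _.
  have bin_neq0 : ('C(j.+1, i))%:R != 0 :> rat.
    by rewrite pnatr_eq0 -lt0n bin_gt0 (leq_ord i).
  rewrite -(bin_fact (leq_ord i)) !natrM expr1n mulr1 -mulr_natr.
  by field; rewrite !fact_neq0 bin_neq0.
by rewrite -exprDn addNr expr0n mulr0.
Qed.

Lemma in_qpoly_expS_mul N : (0 < N)%N -> in_qpoly 'X^N (expS N 1 * expS N (-1)) = 1.
Proof.
move=> N_gt0; rewrite -(rmorph1 (in_qpoly 'X^N)).
by apply/in_qpolyXn_eq => // j jN; rewrite coef_expS_mul // coef1.
Qed.

Section TraceDelta.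
Variables (eps : rat) (k : nat) (x : word).
Hypotheses (eps2 : eps * eps = 1) (k_gt0 : (0 < k)%N) (x_in : inF eps k x).

Lemma coef_phiN_low a b j : (j < k)%N ->
  (phiN eps k.+1 x a b)`_j = ((1%:M : 'M[{poly rat}]_5) a b)`_j.
Proof.
move=> jk; rewrite -(x_in.2 a b j jk).
have trunc_phiN :
    map_mx (in_qpoly 'X^k) (phiN eps k.+1 x) = map_mx (in_qpoly 'X^k) (phiN eps k x).
  apply: map_jones_word_eq; apply/in_qpolyXn_eq => // j' j'k;
    by rewrite !coefCM !coef_expS // ltnW.
by move/matrixP/(_ a b): trunc_phiN; rewrite !mxE => /in_qpolyXn_eq; apply.
Qed.

Lemma phiN_expand :
  map_mx (in_qpoly 'X^(k.+1)) (phiN eps k.+1 x) =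
  map_mx (in_qpoly 'X^(k.+1)) (1%:M + 'X^k *: map_mx polyC (Delta eps k x)).
Proof.
apply/matrixP => a b; rewrite !mxE; apply/in_qpolyXn_eq => // j.
rewrite coefD coefXnM ltnS leq_eqVlt => /orP [/eqP -> | jk]; last first.
  by rewrite jk addr0 coef_phiN_low // mxE.
by rewrite ltnn subnn coefC /= coefMn coef1 (negbTE (lt0n_neq0 k_gt0)) mul0rn add0r.
Qed.

Lemma mxtrace_Delta : \tr (Delta eps k x) = 0.
Proof.
have det_trunc : \det (map_mx (in_qpoly 'X^(k.+1)) (phiN eps k.+1 x)) = 1.
  rewrite /phiN map_jones_word det_jones_word // -rmorphM mulrACA -polyCM eps2 polyC1 mul1r.
  exact: in_qpoly_expS_mul.
have Xk2 : in_qpoly 'X^(k.+1) ('X^k : {poly rat}) * in_qpoly 'X^(k.+1) 'X^k = 0.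
  rewrite -rmorphM -exprD -(rmorph0 (in_qpoly ('X^(k.+1) : {poly rat}))).
  apply/in_qpolyXn_eq => // j jk; rewrite coefXn coef0.
  by have /negbTE -> : j != (k + k)%N by lia.
move: det_trunc; rewrite phiN_expand map_mxD map_mx1 map_mxZ det1_addZ_sqr0 //.
rewrite !trace_map_mx -{2}[1]addr0 => /addrI.
rewrite -rmorphM -(rmorph0 (in_qpoly ('X^(k.+1) : {poly rat}))).
move/in_qpolyXn_eq => /(_ (ltn0Sn k) k (ltnSn k)).
by rewrite coefXnM ltnn subnn coefC coef0.
Qed.
End TraceDelta.

Section Commutant.
Variables (q : rat) (A : 'M[rat]_5).
Hypotheses (q_sign : q = 1 \/ q = -1) (comm : forall i, jU q i *m A = A *m jU q i).

(* [commutator_entry i a b] reads the goal off entry (a, b) of [U_i A = A U_i]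
   and the entries of A found so far. *)
Local Ltac commutator_entry i a b :=
  let q_val := fresh "q_val" in
  case: q_sign => q_val; move: (comm i) => /matrixP/(_ a b);
  rewrite !mxE !big_ord5 !mxE /= ?q_val => ?; lra.

Lemma jU_commutant_scalar : A = (A o0 o0)%:M.
Proof.
have A30 : A o3 o0 = 0 by commutator_entry o0 o1 o0.
have A31 : A o3 o1 = 0 by commutator_entry o0 o1 o1.
have A20 : A o2 o0 = 0 by commutator_entry o0 o2 o2.
have A21 : A o2 o1 = 0 by commutator_entry o0 o2 o3.
have A40 : A o4 o0 = 0 by commutator_entry o0 o4 o2.
have A41 : A o4 o1 = 0 by commutator_entry o0 o4 o3.
have A02 : A o0 o2 = 0 by commutator_entry o1 o0 o0.
have A03 : A o0 o3 = 0 by commutator_entry o1 o0 o1.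
have A12 : A o1 o2 = 0 by commutator_entry o1 o1 o0.
have A13 : A o1 o3 = 0 by commutator_entry o1 o1 o1.
have A22 : A o2 o2 = A o0 o0 by commutator_entry o1 o2 o0.
have A42 : A o4 o2 = 0 by commutator_entry o1 o3 o2.
have A43 : A o4 o3 = 0 by commutator_entry o1 o3 o3.
have A10 : A o1 o0 = 0 by commutator_entry o2 o0 o0.
have A11 : A o1 o1 = A o0 o0 by commutator_entry o3 o1 o0.
have A14 : A o1 o4 = 0 by commutator_entry o2 o1 o3.
have A24 : A o2 o4 = 0 by commutator_entry o2 o2 o3.
have A34 : A o3 o4 = 0 by commutator_entry o2 o3 o3.
have A32 : A o3 o2 = 0 by commutator_entry o2 o4 o2.
have A01 : A o0 o1 = 0 by commutator_entry o3 o0 o0.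
have A04 : A o0 o4 = 0 by commutator_entry o3 o1 o4.
have A23 : A o2 o3 = 0 by commutator_entry o3 o2 o2.
have A33 : A o3 o3 = A o0 o0 by commutator_entry o3 o3 o2.
have A44 : A o4 o4 = A o0 o0 by commutator_entry o3 o3 o4.
apply/matrixP => a b; rewrite mxE.
by case: (ord5P a) => [->|[->|[->|[->|->]]]]; case: (ord5P b) => [->|[->|[->|[->|->]]]];
  rewrite /= ?mulr1n ?mulr0n.
Qed.
End Commutant.

Lemma act_fixed_commute eps (A : 'M[rat]_5) i : eps * eps = 1 ->
  act eps [:: (i, true)] A = A -> jU (eps ^+ 5) i *m A = A *m jU (eps ^+ 5) i.
Proof.
move=> eps2; rewrite /act /rho_eps /= !mulmx1 => fixA.
have GA : jones_gen eps eps (i, true) *m A = A *m jones_gen eps eps (i, true).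
  by rewrite -[LHS]mulmx1 -(jones_gen_inv eps2 i) !mulmxA fixA.
have eps3_neq0 : eps ^+ 3 != 0 by rewrite expf_neq0 // -unitfE; apply/unitrPr; exists eps.
move: GA; rewrite /jones_gen /= -scalemxAl -scalemxAr => /(scalerI eps3_neq0).
by rewrite mulmxDl mulmxDr scalar_mxC => /addrI.
Qed.

Lemma mul_sign_self (e : rat) : e = 1 \/ e = -1 -> e * e = 1.
Proof. by case=> ->; rewrite ?mulrNN mulr1. Qed.

Lemma act_fixed_scalar eps (A : 'M[rat]_5) : eps = 1 \/ eps = -1 ->
  (forall g, act eps g A = A) -> A = (A o0 o0)%:M.
Proof.
move=> heps fixA; have q_sign : eps ^+ 5 = 1 \/ eps ^+ 5 = -1.
  by case: heps => ->; [left | right]; rewrite ?expr1n.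
apply: (jU_commutant_scalar q_sign) => i.
exact: act_fixed_commute (mul_sign_self heps) (fixA [:: (i, true)]).
Qed.

Lemma GkF_traceless eps k A : eps * eps = 1 -> (0 < k)%N -> GkF eps k A -> \tr A = 0.
Proof.
move=> eps2 k_gt0 [n [c [x [x_in ->]]]]; rewrite raddf_sum big1 // => i _ /=.
by rewrite mxtraceZ (mxtrace_Delta eps2 k_gt0 (x_in i)) mulr0.
Qed.

Lemma GkF_fixed_eq0 eps k A : eps = 1 \/ eps = -1 -> (0 < k)%N ->
  GkF eps k A -> (forall g, act eps g A = A) -> A = 0.
Proof.
move=> heps k_gt0 A_in fixA; have A_scalar := act_fixed_scalar heps fixA.
move: (GkF_traceless (mul_sign_self heps) k_gt0 A_in); rewrite A_scalar mxtrace_scalar => /eqP.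
by rewrite mulrn_eq0 /= => /eqP ->; rewrite raddf0.
Qed.

Theorem mainTheorem2 (eps : rat) (heps : eps = 1 \/ eps = -1)
  (k : nat) (hk : (1 <= k)%N) :
  ~ has_trivial_summand eps (GkF eps k).
Proof.
move=> [A [A_neq0 A_in fixA _]].
by move: A_neq0; rewrite (GkF_fixed_eq0 heps hk A_in fixA) eqxx.
Qed.
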